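(* Let $\mathfrak g\xrightarrow{\mu}\mathfrak h$ be a crossed module of Lie algebras, $\phi:W\to V$ linear, $\rho$ a 2-representation on $\phi$, and $\omega\in C^{p,q}_r(\mathfrak g_1,\phi)$. Then $(\partial\delta_{(1)}-\delta_{(1)}\partial)\omega=0\in C^{p+1,q}_{r+1}(\mathfrak g_1,\phi)$; thus, for fixed $q$, the spaces $C^{p,q}_r$ with differentials $\partial$ and $\delta_{(1)}$ form a double complex (the $q$-page).
   Context: Crossed module: Lie algebras $\mathfrak g,\mathfrak h$, Lie homomorphism $\mu$, action $\mathcal L:\mathfrak h\to\mathrm{Der}(\mathfrak g)$ with $\mu(\mathcal L_yx)=[y,\mu(x)]$, $\mathcal L_{\mu(x_0)}x_1=[x_0,x_1]$. 2-representation: linear $\rho_0^1:\mathfrak h\to\mathfrak{gl}(W)$, $\rho_0^0:\mathfrak h\to\mathfrak{gl}(V)$, $\rho_1:\mathfrak g\to\mathrm{Hom}(V,W)$ with $\rho_0^1,\rho_0^0$ representations, $\phi\rho_0^1(y)=\rho_0^0(y)\phi$, $\rho_1([x_0,x_1])=\rho_1(x_0)\phi\rho_1(x_1)-\rho_1(x_1)\phi\rho_1(x_0)$, $\rho_0^0(\mu(x))=\phi\rho_1(x)$, $\rho_0^1(\mu(x))=\rho_1(x)\phi$, $\rho_1(\mathcal L_yx)=\rho_0^1(y)\rho_1(x)-\rho_1(x)\rho_0^0(y)$. $\mathfrak g_0=\mathfrak h$; for $p\ge1$, $\mathfrak g_p=\mathfrak g^p\oplus\mathfrak h$, elements $(x^0,\dots,x^{p-1};y)$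 (a Lie algebra as composable strings of arrows of $\mathfrak g\oplus_{\mathcal L}\mathfrak h$). Face maps $\partial_k:\mathfrak g_{p+1}\to\mathfrak g_p$, $0\le k\le p+1$: $\partial_0(x^0,\dots,x^p;y)=(x^1,\dots,x^p;y)$; $\partial_k(x^0,\dots,x^p;y)=(x^0,\dots,x^{k-1}+x^k,\dots,x^p;y)$ for $0<k\le p$; $\partial_{p+1}(x^0,\dots,x^p;y)=(x^0,\dots,x^{p-1};y+\mu(x^p))$; applied to tuples componentwise. $C^{p,q}_r=\bigwedge^q\mathfrak g_p^*\otimes\bigwedge^r\mathfrak g^*\otimes W$ for $r\ge1$, $C^{p,q}_0=\bigwedge^q\mathfrak g_p^*\otimes V$; elements $\omega(\Xi;Z)$. $\partial:C^{p,q}_r\to C^{p+1,q}_r$, $\partial\omega(\Xi;Z)=\sum_{k=0}^{p+1}(-1)^k\omega(\partial_k\Xi;Z)$. $\delta_{(1)}:C^{p,q}_r\to C^{p,q}_{r+1}$: $\delta_{(1)}\omega(\Xi;x)=\rho_1(x)\omega(\Xi)$ for $r=0$; for $r\ge1$, $\delta_{(1)}\omega(\Xi;z_0,\dots,z_r)=\sum_k(-1)^k\rho_0^1(\mu(z_k))\omega(\Xi;Z(k))+\sum_{a<b}(-1)^{a+b}\omega(\Xi;[z_a,z_b],Z(a,b))$, $Z(k),Z(a,b)$ denoting removal of entries. *)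

From HB Require Import structures.
From mathcomp Require Import all_boot all_order all_algebra.
Set Implicit Arguments. Unset Strict Implicit. Unset Printing Implicit Defensive.
Import GRing.Theory.
Local Open Scope ring_scope.

Definition is_linear (K : fieldType) (U Y : lmodType K) (f : U -> Y) : Prop :=
  forall (a : K) (u v : U), f (a *: u + v) = a *: f u + f v.

Definition upd (T : Type) (n : nat) (X : {ffun 'I_n -> T}) (i : 'I_n) (u : T)
  : {ffun 'I_n -> T} := [ffun j => if j == i then u else X j].

(* multilinear alternating maps U^n -> Y  (= elements of (wedge^n U^* ) (x) Y) *)
Definition multilinear (K : fieldType) (U Y : lmodType K) (n : nat)
  (f : {ffun 'I_n -> U} -> Y) : Prop :=
  forall (X : {ffun 'I_n -> U}) (i : 'I_n) (a : K) (u v : U),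
    f (upd X i (a *: u + v)) = a *: f (upd X i u) + f (upd X i v).

Definition alternating (K : fieldType) (U Y : lmodType K) (n : nat)
  (f : {ffun 'I_n -> U} -> Y) : Prop :=
  forall (X : {ffun 'I_n -> U}) (i j : 'I_n), i != j -> X i = X j -> f X = 0.

Definition alt_multilinear (K : fieldType) (U Y : lmodType K) (n : nat)
  (f : {ffun 'I_n -> U} -> Y) : Prop :=
  multilinear f /\ alternating f.

Definition lie_bracket (K : fieldType) (G : lmodType K) (br : G -> G -> G) : Prop :=
  [/\ forall (a : K) (x y z : G), br (a *: x + y) z = a *: br x z + br y z,
      forall (a : K) (x y z : G), br x (a *: y + z) = a *: br x y + br x z,
      forall x : G, br x x = 0
    & forall x y z : G, br x (br y z) + br y (br z x) + br z (br x y) = 0].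

Record crossed_module (K : fieldType) (G H : lmodType K)
  (brg : G -> G -> G) (brh : H -> H -> H) (mu : G -> H) (L : H -> G -> G) : Prop := {
  cm_lie_g : lie_bracket brg;
  cm_lie_h : lie_bracket brh;
  cm_mu_lin : is_linear mu;
  cm_mu_hom : forall x x' : G, mu (brg x x') = brh (mu x) (mu x');
  cm_L_lin : forall (a : K) (y y' : H) (x : G), L (a *: y + y') x = a *: L y x + L y' x;
  cm_Ly_lin : forall y : H, is_linear (L y);
  cm_Ly_der : forall (y : H) (x x' : G), L y (brg x x') = brg (L y x) x' + brg x (L y x');
  cm_L_hom : forall (y y' : H) (x : G), L (brh y y') x = L y (L y' x) - L y' (L y x);
  cm_equiv : forall (y : H) (x : G), mu (L y x) = brh y (mu x);
  cm_peiffer : forall x0 x1 : G, L (mu x0) x1 = brg x0 x1 }.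

Record two_rep (K : fieldType) (G H V W : lmodType K)
  (brg : G -> G -> G) (brh : H -> H -> H) (mu : G -> H) (L : H -> G -> G)
  (phi : W -> V) (rho01 : H -> W -> W) (rho00 : H -> V -> V) (rho1 : G -> V -> W)
  : Prop := {
  tr_phi_lin : is_linear phi;
  tr_rho01_lin : forall (a : K) (y y' : H) (w : W), rho01 (a *: y + y') w = a *: rho01 y w + rho01 y' w;
  tr_rho01y_lin : forall y : H, is_linear (rho01 y);
  tr_rho00_lin : forall (a : K) (y y' : H) (v : V), rho00 (a *: y + y') v = a *: rho00 y v + rho00 y' v;
  tr_rho00y_lin : forall y : H, is_linear (rho00 y);
  tr_rho1_lin : forall (a : K) (x x' : G) (v : V), rho1 (a *: x + x') v = a *: rho1 x v + rho1 x' v;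
  tr_rho1x_lin : forall x : G, is_linear (rho1 x);
  tr_rho01_rep : forall (y y' : H) (w : W), rho01 (brh y y') w = rho01 y (rho01 y' w) - rho01 y' (rho01 y w);
  tr_rho00_rep : forall (y y' : H) (v : V), rho00 (brh y y') v = rho00 y (rho00 y' v) - rho00 y' (rho00 y v);
  tr_phi_equiv : forall (y : H) (w : W), phi (rho01 y w) = rho00 y (phi w);
  tr_rho1_br : forall (x0 x1 : G) (v : V),
      rho1 (brg x0 x1) v = rho1 x0 (phi (rho1 x1 v)) - rho1 x1 (phi (rho1 x0 v));
  tr_rho00_mu : forall (x : G) (v : V), rho00 (mu x) v = phi (rho1 x v);
  tr_rho01_mu : forall (x : G) (w : W), rho01 (mu x) w = rho1 x (phi w);
  tr_rho1_L : forall (y : H) (x : G) (v : V), rho1 (L y x) v = rho01 y (rho1 x v) - rho1 x (rho00 y v) }.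

(* g_p = g^p (+) h, element (x^0,...,x^{p-1}; y); for p = 0 this is h. *)
Definition gp (K : fieldType) (G H : lmodType K) (p : nat) : lmodType K :=
  ({ffun 'I_p -> G} * H)%type.

(* face map d_k : g_{p+1} -> g_p, 0 <= k <= p+1 *)
Definition face (K : fieldType) (G H : lmodType K) (mu : G -> H) (p k : nat)
  (xi : gp G H p.+1) : gp G H p :=
  if k == p.+1 then
    ([ffun i : 'I_p => xi.1 (widen_ord (leqnSn p) i)], xi.2 + mu (xi.1 ord_max))
  else
    ([ffun i : 'I_p =>
        if (i.+1 < k)%N then xi.1 (widen_ord (leqnSn p) i)
        else if (i.+1 == k)%N then xi.1 (widen_ord (leqnSn p) i) + xi.1 (lift ord0 i)
        else xi.1 (lift ord0 i)], xi.2).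

Definition faceT (K : fieldType) (G H : lmodType K) (mu : G -> H) (p k q : nat)
  (X : {ffun 'I_q -> gp G H p.+1}) : {ffun 'I_q -> gp G H p} :=
  [ffun j => face mu k (X j)].

(* C^{p,q}_0 = wedge^q g_p^* (x) V *)
Definition C0 (K : fieldType) (G H V : lmodType K) (p q : nat) : Type :=
  {ffun 'I_q -> gp G H p} -> V.
(* C^{p,q}_r = wedge^q g_p^* (x) wedge^r g^* (x) W,  r >= 1 *)
Definition Cr (K : fieldType) (G H W : lmodType K) (p q r : nat) : Type :=
  {ffun 'I_q -> gp G H p} -> {ffun 'I_r -> G} -> W.

Definition is_cochain0 (K : fieldType) (G H V : lmodType K) (p q : nat)
  (omega : C0 G H V p q) : Prop := alt_multilinear omega.

Definition is_cochainr (K : fieldType) (G H W : lmodType K) (p q r : nat)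
  (omega : Cr G H W p q r) : Prop :=
  (forall Z, alt_multilinear (fun X => omega X Z)) /\
  (forall X, alt_multilinear (omega X)).

Definition partial0 (K : fieldType) (G H V : lmodType K) (mu : G -> H) (p q : nat)
  (omega : C0 G H V p q) : C0 G H V p.+1 q :=
  fun X => \sum_(k < p.+2) (-1) ^+ k *: omega (faceT mu k X).

Definition partialr (K : fieldType) (G H W : lmodType K) (mu : G -> H) (p q r : nat)
  (omega : Cr G H W p q r) : Cr G H W p.+1 q r :=
  fun X Z => \sum_(k < p.+2) (-1) ^+ k *: omega (faceT mu k X) Z.

Definition rem1 (T : Type) (r : nat) (Z : {ffun 'I_r.+1 -> T}) (k : 'I_r.+1)
  : {ffun 'I_r -> T} := [ffun i => Z (lift k i)].

(* index of the i-th entry of Z(a,b) (a < b) in Z *)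
Definition skip2 (a b i : nat) : nat :=
  if (i < a)%N then i else if (i.+1 < b)%N then i.+1 else i.+2.

(* ([z_a, z_b], Z(a,b)) *)
Definition brack_rem (K : fieldType) (G : lmodType K) (brg : G -> G -> G) (r : nat)
  (Z : {ffun 'I_r.+1 -> G}) (a b : 'I_r.+1) : {ffun 'I_r -> G} :=
  [ffun j : 'I_r => if (j == 0 :> nat) then brg (Z a) (Z b)
                    else Z (inord (skip2 a b j.-1))].

Definition delta0 (K : fieldType) (G H V W : lmodType K) (rho1 : G -> V -> W) (p q : nat)
  (omega : C0 G H V p q) : Cr G H W p q 1 :=
  fun X Z => rho1 (Z ord0) (omega X).

Definition deltar (K : fieldType) (G H W : lmodType K) (brg : G -> G -> G) (mu : G -> H)
  (rho01 : H -> W -> W) (p q r : nat) (omega : Cr G H W p q r) : Cr G H W p q r.+1 :=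
  fun X Z =>
    \sum_(k < r.+1) (-1) ^+ k *: rho01 (mu (Z k)) (omega X (rem1 Z k))
  + \sum_(a < r.+1) \sum_(b < r.+1 | (a < b)%N)
        (-1) ^+ (a + b) *: omega X (brack_rem brg Z a b).

From mathcomp Require Import all_boot all_order all_algebra.
Import GRing.Theory.
Local Open Scope ring_scope.

(* The simplicial differential only acts on the g_p-arguments Xi, whereas
   delta_(1) only acts on the g-arguments Z and reaches the values of omega
   through the linear maps rho_1(x) and rho_0^1(mu z).  Both composites are
   therefore the same double sum: commuting them only exchanges finite sums
   and pulls scalars through linear maps. *)

Section IsLinear.
Variables (K : fieldType) (U Y : lmodType K) (f : U -> Y).
Hypothesis f_lin : is_linear f.

Lemma is_linear0 : f 0 = 0.
Proof.
have := f_lin 1 0 0; rewrite scaler0 addr0 scale1r => f0.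
by apply: (@addrI _ (f 0)); rewrite addr0 -f0.
Qed.

Lemma is_linearD (u v : U) : f (u + v) = f u + f v.
Proof. by rewrite -[u in LHS]scale1r f_lin scale1r. Qed.

Lemma is_linearZ (a : K) (u : U) : f (a *: u) = a *: f u.
Proof. by rewrite -[a *: u]addr0 f_lin is_linear0 addr0. Qed.

Lemma is_linear_sum (I : Type) (r : seq I) (P : pred I) (c : I -> K) (g : I -> U) :
  f (\sum_(i <- r | P i) c i *: g i) = \sum_(i <- r | P i) c i *: f (g i).
Proof.
rewrite (big_morph f is_linearD is_linear0).
by apply: eq_bigr => i _; rewrite is_linearZ.
Qed.

End IsLinear.

Lemma scaler_sum_exchange (K : fieldType) (Y : lmodType K) (I J : Type)
    (r : seq I) (s : seq J) (P : pred I) (Q : pred J)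
    (c : I -> K) (d : J -> K) (F : I -> J -> Y) :
  \sum_(i <- r | P i) c i *: \sum_(j <- s | Q j) d j *: F i j
  = \sum_(j <- s | Q j) d j *: \sum_(i <- r | P i) c i *: F i j.
Proof.
under eq_bigr do rewrite scaler_sumr.
rewrite exchange_big /=; apply: eq_bigr => j _.
by rewrite scaler_sumr; apply: eq_bigr => i _; rewrite !scalerA mulrC.
Qed.

Section PartialDelta.
Variables (K : fieldType) (G H V W : lmodType K) (mu : G -> H) (p q : nat).

Lemma partialr_delta0 (rho1 : G -> V -> W) (omega : C0 G H V p q) :
  (forall x : G, is_linear (rho1 x)) ->
  partialr mu (delta0 rho1 omega) =2 delta0 rho1 (partial0 mu omega).
Proof. by move=> rho1_lin X Z; rewrite /delta0 /partial0 is_linear_sum. Qed.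

Lemma partialr_deltar (brg : G -> G -> G) (rho01 : H -> W -> W) (r : nat)
    (omega : Cr G H W p q r) :
  (forall y : H, is_linear (rho01 y)) ->
  partialr mu (deltar brg mu rho01 omega) =2 deltar brg mu rho01 (partialr mu omega).
Proof.
move=> rho01_lin X Z; rewrite /partialr /deltar.
under eq_bigr do rewrite scalerDr.
rewrite big_split /=; congr (_ + _).
  under [RHS]eq_bigr do rewrite is_linear_sum //.
  exact: scaler_sum_exchange.
under eq_bigr do rewrite scaler_sumr.
rewrite exchange_big /=; apply: eq_bigr => a _.
exact: scaler_sum_exchange.
Qed.

End PartialDelta.

Theorem mainTheorem8 (K : fieldType) (G H V W : lmodType K)
  (brg : G -> G -> G) (brh : H -> H -> H) (mu : G -> H) (L : H -> G -> G)
  (phi : W -> V) (rho01 : H -> W -> W) (rho00 : H -> V -> V) (rho1 : G -> V -> W) :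
  crossed_module brg brh mu L ->
  two_rep brg brh mu L phi rho01 rho00 rho1 ->
  forall p q : nat,
    (forall omega : C0 G H V p q, is_cochain0 omega ->
       forall (X : {ffun 'I_q -> gp G H p.+1}) (Z : {ffun 'I_1 -> G}),
         partialr mu (delta0 rho1 omega) X Z - delta0 rho1 (partial0 mu omega) X Z = 0)
 /\ (forall r : nat, (1 <= r)%N ->
     forall omega : Cr G H W p q r, is_cochainr omega ->
       forall (X : {ffun 'I_q -> gp G H p.+1}) (Z : {ffun 'I_r.+1 -> G}),
         partialr mu (deltar brg mu rho01 omega) X Z
         - deltar brg mu rho01 (partialr mu omega) X Z = 0).
Proof.
move=> _ rep p q; split=> [omega _ X Z | r _ omega _ X Z].
  by rewrite partialr_delta0 ?subrr //; exact: tr_rho1x_lin rep.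
by rewrite partialr_deltar ?subrr //; exact: tr_rho01y_lin rep.
Qed.
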